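(* Let $I$ be a conserved interval of $\mathcal{P}$ with maximal frontier set $F_I=\{f_1<f_2<\cdots<f_k\}$, and let $(a..c)\subseteq I$ be a conserved interval. Then exactly one of the following holds: (1) some $f_l$ lies in $(a..c)$, and then there exist $i\leq j$ such that $(a..c)=(f_i..f_j)$; (2) $(a..c)$ contains no element of $F_I$, and then there exists $i$ such that $f_i<a\leq c<f_{i+1}$.
   Context: Let $n\geq 2$ and let $\mathcal{P}=\{P_1,\ldots,P_K\}$ be signed permutations of $\{1,\ldots,n\}$: each $P_k$ is an ordering of $1,\ldots,n$ in which each element carries a sign $+$ or $-$. Assume $P_1=(+1,+2,\ldots,+n)$ and that every $P_k$ has first element $+1$ and last element $+n$. For integers $i\leq j$ write $(i..j)=\{i,\ldots,j\}$. A conserved interval of $\mathcal{P}$ is either a singleton, or a set $(a..c)$ with $a<c$ which (ignoring signs) occupies consecutive positions in every $P_k$ and which, in every $P_k$, has either $+a$ at its left end and $+c$ at its right end, or $-c$ at its left end and $-a$ at its right end. For a conserved interval $I=(a..c)$, a set $\{f_1,\ldots,f_k\}$ with $a=f_1<\cdots<f_k=c$ is a set of frontiers of $I$ if $(f_i..f_j)$ is conserved for all $1\leq i<j\leq k$; $F_I$ denotes the unique inclusion-maximal set of frontiers of $I$ (the union of all sets of frontiers of $I$). *)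

From mathcomp Require Import all_boot all_order all_algebra.
Set Implicit Arguments. Unset Strict Implicit. Unset Printing Implicit Defensive.

(* A signed permutation of {1,...,n} is a sequence of integers: the entry
   Posz x stands for +x and - Posz x for -x. *)
Definition signed_perm (n : nat) (P : seq int) : Prop :=
  perm_eq (map absz P) (iota 1 n).

Definition id_sperm (n : nat) : seq int := map Posz (iota 1 n).

Definition good_family (n : nat) (Ps : seq (seq int)) : Prop :=
  2 <= n /\ head [::] Ps = id_sperm n /\ Ps != [::] /\
  forall P, P \in Ps ->
    [/\ signed_perm n P, head 0%R P = Posz 1 & last 0%R P = Posz n].

(* (a..c) = {a,...,c} occupies consecutive positions i..i+c-a of P
   (ignoring signs) with +a at the left end and +c at the right end, or
   -c at the left end and -a at the right end. *)
Definition conserved_in (P : seq int) (a c : nat) : Prop :=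
  exists i, let m := (c - a).+1 in
    [/\ i + m <= size P,
        perm_eq (map absz (take m (drop i P))) (iota a m) &
        (nth 0%R P i = Posz a /\ nth 0%R P (i + m).-1 = Posz c) \/
        (nth 0%R P i = (- Posz c)%R /\ nth 0%R P (i + m).-1 = (- Posz a)%R)].

Definition conserved (n : nat) (Ps : seq (seq int)) (a c : nat) : Prop :=
  (a = c /\ 1 <= a <= n) \/
  (a < c /\ forall P, P \in Ps -> conserved_in P a c).

Definition frontier_set (n : nat) (Ps : seq (seq int)) (a c : nat)
    (S : seq nat) : Prop :=
  [/\ a \in S, c \in S, (forall x, x \in S -> a <= x <= c) &
      forall x y, x \in S -> y \in S -> x < y -> conserved n Ps x y].

Definition in_maxF (n : nat) (Ps : seq (seq int)) (a c x : nat) : Prop :=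
  exists S, frontier_set n Ps a c S /\ x \in S.

From mathcomp Require Import all_boot all_order all_algebra.
From mathcomp Require Import zify.
Set Implicit Arguments. Unset Strict Implicit.

(* Two overlapping conserved intervals (u1..v1) and (u2..v2), with
   u1 <= u2 <= v1 <= v2, split into the conserved pieces (u1..u2), (u2..v1),
   (v1..v2), and their union is conserved: in every permutation both occupy
   windows of consecutive positions, necessarily read in the same direction,
   and intersecting or joining such windows gives windows again.  Hence if
   (a..c) contains a frontier l, adding a and c to a set of frontiers
   through l keeps it a set of frontiers, so a = f_i and c = f_j.  Otherwise
   (a..c) falls strictly between two consecutive frontiers, because
   f_1 = a0 < a and c < c0 = f_k. *)

Section Occupancy.
Variables (s : seq nat) (p : nat -> nat).

Definition occupies (a c : nat) : Prop :=
  forall y, (y \in s) && (p a <= p y <= p c) = (a <= y <= c).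

Hypothesis p_inj : {in s &, injective p}.

Lemma occupies_refl x : x \in s -> occupies x x.
Proof.
move=> xs y; have [->|yx] := eqVneq y x; first by rewrite xs !leqnn.
have [ys|] /= := boolP (y \in s); last by lia.
have : p y != p x by apply: contra_neq yx; apply: p_inj.
lia.
Qed.

Lemma occupies_overlap u1 v1 u2 v2 : u1 <= u2 <= v1 -> v1 <= v2 ->
  occupies u1 v1 -> occupies u2 v2 ->
  [/\ occupies u1 u2, occupies u2 v1 & occupies v1 v2].
Proof.
move=> /andP[u12 u2v1] v12 W1 W2.
have /andP[u2s pu2] : (u2 \in s) && (p u1 <= p u2 <= p v1) by rewrite W1; lia.
have /andP[v1s pv1] : (v1 \in s) && (p u2 <= p v1 <= p v2) by rewrite W2; lia.
have at_u2 y : y \in s -> p y = p u2 <-> y = u2 by split=> [|->//]; apply: p_inj.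
have at_v1 y : y \in s -> p y = p v1 <-> y = v1 by split=> [|->//]; apply: p_inj.
split=> y; have := W1 y; have := W2 y; have := at_u2 y; have := at_v1 y;
  case: (y \in s) => /=; lia.
Qed.

Lemma occupies_cat a b c : a <= b <= c ->
  occupies a b -> occupies b c -> occupies a c.
Proof.
move=> abc W1 W2 y; have := W1 y; have := W2 y; have := W1 b; have := W2 b.
by case: (y \in s); case: (b \in s) => /=; lia.
Qed.

End Occupancy.

Lemma mem_take_drop (T : eqType) (u : seq T) i k y : uniq u ->
  (y \in take k (drop i u)) = (y \in u) && (i <= index y u < i + k).
Proof.
move=> u_uniq; apply/idP/andP => [|[yu /andP[iy yk]]].
  case/(nthP y) => j; rewrite size_take_min size_drop leq_min => /andP[jk ji] <-.
  rewrite nth_take // nth_drop mem_nth ?index_uniq //; lia.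
rewrite -(nth_index y yu) -(subnKC iy) -nth_drop -(@nth_take k); last by lia.
apply: mem_nth; rewrite size_take_min size_drop leq_min; have := index_mem y u; lia.
Qed.

Lemma window_iota (u : seq nat) lo hi a c : uniq u -> lo <= hi < size u ->
  (forall y, (y \in u) && (lo <= index y u <= hi) = (a <= y <= c)) ->
  hi = lo + (c - a) /\ perm_eq (take (c - a).+1 (drop lo u)) (iota a (c - a).+1).
Proof.
move=> u_uniq lohi W.
have ac : a <= c.
  by have := W (nth 0 u lo); rewrite mem_nth ?index_uniq //=; lia.
have win : perm_eq (take (hi - lo).+1 (drop lo u)) (iota a (c - a).+1).
  apply: uniq_perm; rewrite ?take_uniq ?drop_uniq ?iota_uniq // => y.
  by rewrite mem_take_drop // mem_iota; have := W y; lia.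
have take_len : (hi - lo).+1 <= size (drop lo u) by rewrite size_drop; lia.
have := perm_size win; rewrite size_iota (size_takel take_len) => -[len].
by rewrite len in win; split=> //; lia.
Qed.

(* The position of x in P read from the left (o = true) or from the right
   (o = false); a conserved interval occupies consecutive places for one of
   the two readings, with the matching signs at its ends. *)
Definition place (P : seq int) (o : bool) (x : nat) : nat :=
  if o then index x (map absz P) else size P - index x (map absz P).

Definition entry (P : seq int) (x : nat) : int := nth 0%R P (index x (map absz P)).

Definition signed (o : bool) (x : nat) : int := if o then Posz x else (- Posz x)%R.

Definition oriented_block (P : seq int) (o : bool) (a c : nat) : Prop :=
  [/\ occupies (map absz P) (place P o) a c,
      entry P a = signed o a & entry P c = signed o c].

Section Blocks.
Variable P : seq int.
Hypothesis P_uniq : uniq (map absz P).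
Local Notation u := (map absz P).

Lemma index_absz_nth i : i < size P -> index (absz (nth 0%R P i)) u = i.
Proof. by move=> iP; rewrite -(nth_map _ 0) // index_uniq ?size_map. Qed.

Lemma place_inj o : {in u &, injective (place P o)}.
Proof.
move=> x y xu yu; rewrite /place; have := index_mem x u; have := index_mem y u.
rewrite xu yu size_map => yP xP; case: o => E; apply: index_inj => //; lia.
Qed.

Lemma place_flip o : {in u &, forall x y,
  (place P o x <= place P o y) = (place P (~~ o) y <= place P (~~ o) x)}.
Proof.
move=> x y xu yu; rewrite /place; have := index_mem x u; have := index_mem y u.
by rewrite xu yu size_map; case: o => /=; lia.
Qed.

Lemma block_of_conserved_in a c : a <= c ->
  conserved_in P a c -> exists o, oriented_block P o a c.
Proof.
move=> ac [i [size_ok win ends]].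
rewrite map_take map_drop in win.
have W y : (y \in u) && (i <= index y u <= i + (c - a)) = (a <= y <= c).
  by have := perm_mem win y; rewrite mem_take_drop // mem_iota; lia.
have jP : i + (c - a) < size P by lia.
have iP : i < size P by lia.
have last_pos : (i + (c - a).+1).-1 = i + (c - a) by lia.
rewrite last_pos in ends.
case: ends => -[Ea Ec]; have := index_absz_nth iP; have := index_absz_nth jP;
  rewrite Ea Ec ?abszN /= => at_j at_i.
- exists true; split; rewrite /entry ?at_i ?at_j //.
  by move=> y; rewrite /place at_i at_j.
- exists false; split; rewrite /entry ?at_i ?at_j //.
  move=> y; rewrite /place at_i at_j; have := W y; case: (boolP (y \in u)) => //= yu.
  have := index_mem y u; rewrite yu size_map; lia.
Qed.

Lemma conserved_in_of_block o a c : a <= c ->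
  oriented_block P o a c -> conserved_in P a c.
Proof.
move=> ac [W Ea Ec].
have /andP[au _] : (a \in u) && (place P o a <= place P o a <= place P o c).
  by rewrite W leqnn ac.
have /andP[cu _] : (c \in u) && (place P o a <= place P o c <= place P o c).
  by rewrite W leqnn ac.
have := index_mem a u; have := index_mem c u; rewrite au cu size_map => cP aP.
pose lo := if o then index a u else index c u.
pose hi := if o then index c u else index a u.
have W' y : (y \in u) && (lo <= index y u <= hi) = (a <= y <= c).
  have := W y; rewrite /place /lo /hi; case: o {W Ea Ec lo hi} => //.
  by case: (boolP (y \in u)) => //= yu; have := index_mem y u; rewrite yu size_map; lia.
have [hi_eq win] : hi = lo + (c - a) /\
    perm_eq (take (c - a).+1 (drop lo u)) (iota a (c - a).+1).
  apply: window_iota W'; rewrite // size_map /lo /hi.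
  by have := W a; have := W c; rewrite /place leqnn ac; case: o {W Ea Ec lo hi} => /=; lia.
have hiP : hi < size P by rewrite /hi; case: ifP.
exists lo; split; [lia | by rewrite map_take map_drop |].
have -> : (lo + (c - a).+1).-1 = hi by lia.
by rewrite /lo /hi; case: o {W W' hi_eq hiP win lo hi} Ea Ec => Ea Ec; [left | right].
Qed.

Lemma block_overlap_orientation o1 o2 u1 v1 u2 v2 : u1 <= u2 < v1 -> v1 <= v2 ->
  oriented_block P o1 u1 v1 -> oriented_block P o2 u2 v2 -> o1 = o2.
Proof.
move=> /andP[u12 u2v1] v12 [W1 _ _] [W2 _ _].
have /andP[u2u in1] : (u2 \in u) && (place P o1 u1 <= place P o1 u2 <= place P o1 v1).
  by rewrite W1; lia.
have /andP[v1u in2] : (v1 \in u) && (place P o2 u2 <= place P o2 v1 <= place P o2 v2).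
  by rewrite W2; lia.
apply/eqP; apply: contraLR u2v1 => /negPf o12.
have o2E : o2 = ~~ o1 by case: o1 o2 o12 {W1 W2 in1 in2} => -[].
rewrite o2E -(place_flip _ v1u u2u) in in2.
suff -> : u2 = v1 by rewrite ltnn.
by apply: (place_inj (o := o1)) => //; lia.
Qed.

Lemma signed_inj o1 o2 x : 0 < x -> signed o1 x = signed o2 x -> o1 = o2.
Proof. by case: o1 o2 => -[] //= x_gt0 /eqP; rewrite ?eqr_oppLR /=; lia. Qed.

Lemma conserved_in_refl x : x \in u -> conserved_in P x x.
Proof.
move=> xu; have xP : index x u < size P by rewrite -(size_map absz) index_mem.
have := nth_index 0 xu; rewrite (nth_map 0%R) // -/(entry P x).
have [o Eo] : exists o, entry P x = signed o `|entry P x|%N.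
  by case: (entry P x) => k; [exists true | exists false; rewrite NegzE].
move=> Ex; apply: (@conserved_in_of_block o) => //; rewrite Ex in Eo.
by split=> //; apply: occupies_refl => //; apply: place_inj.
Qed.

Lemma conserved_in_overlap u1 v1 u2 v2 : u1 <= u2 < v1 -> v1 <= v2 ->
  conserved_in P u1 v1 -> conserved_in P u2 v2 ->
  [/\ conserved_in P u1 u2, conserved_in P u2 v1 & conserved_in P v1 v2].
Proof.
move=> hu hv /block_of_conserved_in-/(_ _)[|o B1]; first lia.
move=> /block_of_conserved_in-/(_ _)[|o' B2]; first lia.
have oo' := block_overlap_orientation hu hv B1 B2; subst o'.
case: B1 B2 => W1 Eu1 Ev1 [W2 Eu2 Ev2].
have [|W12 W21 W22] := occupies_overlap (@place_inj o) _ hv W1 W2; first lia.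
by split; apply: (@conserved_in_of_block o); rewrite //; lia.
Qed.

Lemma conserved_in_cat a b c : a < b <= c ->
  conserved_in P a b -> conserved_in P b c -> conserved_in P a c.
Proof.
move=> habc /block_of_conserved_in-/(_ _)[|o [W1 Ea Eb]]; first lia.
move=> /block_of_conserved_in-/(_ _)[|o' [W2 Eb' Ec]]; first lia.
have oo' : o' = o by apply: (@signed_inj _ _ b); [lia | rewrite -Eb -Eb'].
rewrite oo' in W2 Ec; apply: (@conserved_in_of_block o); first lia.
by split=> //; apply: occupies_cat W1 W2; lia.
Qed.

End Blocks.

Lemma conserved_in_mem P a c y : a <= y <= c ->
  conserved_in P a c -> y \in map absz P.
Proof.
move=> ayc [i [_ win _]]; have := perm_mem win y; rewrite mem_iota.
have -> : a <= y < a + (c - a).+1 by lia.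
by rewrite map_take map_drop => /mem_take /mem_drop.
Qed.

Lemma conserved_le n Ps a c : conserved n Ps a c -> a <= c.
Proof. by case=> [[-> _] | [/ltnW]]. Qed.

Section Family.
Variables (n : nat) (Ps : seq (seq int)).
Hypothesis family : good_family n Ps.

Lemma family_mem P x : P \in Ps -> (x \in map absz P) = (1 <= x <= n).
Proof.
case: family => _ [_ [_ members]] /members[perm_P _ _].
by rewrite (perm_mem perm_P) mem_iota; lia.
Qed.

Lemma family_uniq P : P \in Ps -> uniq (map absz P).
Proof.
case: family => _ [_ [_ members]] /members[perm_P _ _].
by rewrite (perm_uniq perm_P) iota_uniq.
Qed.

Lemma family_nonempty : exists P, P \in Ps.
Proof. by case: family => _ [_ []]; case: Ps => // P Ps' _ _; exists P; rewrite mem_head. Qed.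

Lemma conservedP x y : x <= y ->
  conserved n Ps x y <-> forall P, P \in Ps -> conserved_in P x y.
Proof.
rewrite leq_eqVlt => /orP[/eqP <- | xy]; split.
- case=> [[_ xn] P PPs | []]; last by rewrite ltnn.
  by apply: conserved_in_refl; rewrite ?family_uniq ?family_mem.
- have [P PPs] := family_nonempty => C; left; split=> //.
  by rewrite -(family_mem _ PPs); apply: conserved_in_mem (C P PPs); rewrite leqnn.
- by case=> [[xy_eq _] | [_ //]]; move: xy; rewrite xy_eq ltnn.
- by move=> C; right.
Qed.

Lemma conserved_range x y z : conserved n Ps x y -> x <= z <= y -> 1 <= z <= n.
Proof.
move=> C xzy; have [P PPs] := family_nonempty.
have xy : x <= y by lia.
by have /(conserved_in_mem xzy) := (conservedP xy).1 C P PPs; rewrite family_mem.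
Qed.

Lemma conserved_cat a b c : a <= b <= c ->
  conserved n Ps a b -> conserved n Ps b c -> conserved n Ps a c.
Proof.
move=> abc; have [<- // | ab] := eqVneq a b; have [<- // | bc] := eqVneq b c.
have [ab' bc' ac'] : [/\ a <= b, b <= c & a <= c] by split; lia.
move=> /(conservedP ab') C1 /(conservedP bc') C2; apply/(conservedP ac') => P PPs.
by apply: (conserved_in_cat (family_uniq PPs) _ (C1 P PPs) (C2 P PPs)); lia.
Qed.

Lemma conserved_overlap u1 v1 u2 v2 : u1 <= u2 <= v1 -> v1 <= v2 ->
  conserved n Ps u1 v1 -> conserved n Ps u2 v2 ->
  [/\ conserved n Ps u1 u2, conserved n Ps u2 v1, conserved n Ps v1 v2
     & conserved n Ps u1 v2].
Proof.
move=> hu hv C1 C2.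
suff [C12 C21 C22] : [/\ conserved n Ps u1 u2, conserved n Ps u2 v1
                        & conserved n Ps v1 v2].
  by split=> //; apply: conserved_cat C1 C22; lia.
have [v1u2 | u2v1] := leqP v1 u2.
  have u2v1 : u2 = v1 by lia.
  by subst u2; split=> //; left; split=> //; apply: conserved_range C1 _; lia.
have [le1 le2] : u1 <= v1 /\ u2 <= v2 by split; lia.
move: C1 C2 => /(conservedP le1) C1 /(conservedP le2) C2.
have split_in P : P \in Ps -> [/\ conserved_in P u1 u2, conserved_in P u2 v1
                                 & conserved_in P v1 v2].
  by move=> PPs; apply: conserved_in_overlap (C1 P PPs) (C2 P PPs);
    rewrite ?family_uniq //; lia.
by split; apply/conservedP=> [|P /split_in[]//]; lia.
Qed.

End Family.

Lemma sorted_index_leq (s : seq nat) : sorted ltn s ->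
  {in s &, forall x y, x <= y -> index x s <= index y s}.
Proof.
move=> s_sorted x y xs ys xy; rewrite leqNgt; apply/negP.
by move=> /(sorted_ltn_index ltn_trans s_sorted y x ys xs); lia.
Qed.

Lemma sorted_gap (s : seq nat) a c x y : sorted ltn s ->
  {in s, forall l, ~~ (a <= l <= c)} -> x \in s -> x < a -> y \in s -> a <= y ->
  exists i, i.+1 < size s /\ nth 0 s i < a /\ c < nth 0 s i.+1.
Proof.
move=> s_sorted gap xs xa ys ay.
have s_has : has (fun z => a <= z) s by apply/hasP; exists y.
pose k := find (fun z => a <= z) s.
have ks : k < size s by rewrite -has_find.
have ak : a <= nth 0 s k := nth_find 0 s_has.
have k_gt0 : 0 < k.
  rewrite lt0n; apply/eqP => k0; rewrite k0 in ak ks.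
  have x_first : index x s <= index (nth 0 s 0) s.
    by apply: sorted_index_leq; rewrite ?mem_nth //; lia.
  have := index_nth 0 ks; rewrite leqn0 => /eqP z0; rewrite z0 leqn0 in x_first.
  by have := nth_index 0 xs; rewrite (eqP x_first) => xE; rewrite xE in ak; lia.
exists k.-1; rewrite prednK //; split=> //; split.
  have km : k.-1 < k by rewrite ltn_predL.
  by have /negbT := before_find 0 km; rewrite -ltnNge.
by have := gap _ (mem_nth 0 ks); rewrite ak /= -ltnNge.
Qed.

Section Frontiers.
Variables (n : nat) (Ps : seq (seq int)) (a0 c0 : nat).
Hypotheses (family : good_family n Ps) (I_conserved : conserved n Ps a0 c0).
Local Notation frontier_set := (frontier_set n Ps a0 c0).
Local Notation conserved := (conserved n Ps).

Lemma frontier_pair : frontier_set [:: a0; c0].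
Proof.
have a0c0 := conserved_le I_conserved.
split=> [||x|x y]; rewrite ?inE ?eqxx ?orbT //.
  by case/orP=> /eqP->; lia.
by case/orP=> /eqP-> /orP[]/eqP-> //; lia.
Qed.

Lemma frontier_conserved S x y : frontier_set S ->
  x \in S -> y \in S -> x <= y -> conserved x y.
Proof.
move=> [_ _ S_range S_conserved] xS yS; rewrite leq_eqVlt => /orP[/eqP <- | ].
  by left; split=> //; apply: (conserved_range family I_conserved); exact: S_range.
exact: S_conserved.
Qed.

Lemma frontier_set_cons S x : frontier_set S -> a0 <= x <= c0 ->
  (forall y, y \in S -> y < x -> conserved y x) ->
  (forall y, y \in S -> x < y -> conserved x y) ->
  frontier_set (x :: S).
Proof.
move=> [a0S c0S S_range S_conserved] x_range below above.
split=> [||y|y z]; rewrite ?inE ?a0S ?c0S ?orbT //.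
  by case/orP=> [/eqP-> | /S_range].
case/orP=> [/eqP-> | yS] /orP[/eqP-> | zS]; rewrite ?ltnn //; auto.
Qed.

Lemma frontier_ends S l a c : frontier_set S -> l \in S ->
  conserved a c -> a0 <= a <= l -> l <= c <= c0 -> frontier_set (a :: c :: S).
Proof.
move=> FS lS ac_conserved al lc.
have [a0S _ S_range _] := FS.
have link y : y \in S ->
    [/\ y <= a -> conserved y a /\ conserved y c,
        a <= y <= c -> conserved a y /\ conserved y c
      & c <= y -> conserved a y /\ conserved c y].
  move=> yS; split=> hy.
  - have [|||] := conserved_overlap family _ _ (frontier_conserved FS yS lS _) ac_conserved;
      by [lia|].
  - have [|||] := conserved_overlap family _ _
      (frontier_conserved FS a0S yS _) ac_conserved; by [lia|].
  - have [|||] := conserved_overlap family _ _ ac_conserved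
      (frontier_conserved FS lS yS _); by [lia|].
have a_range : a0 <= a <= c0 by have := S_range a0 a0S; lia.
have c_range : a0 <= c <= c0 by have := S_range a0 a0S; lia.
apply: frontier_set_cons => //; first apply: frontier_set_cons => //.
- move=> y yS yc; have [below within _] := link y yS.
  have [/below[] // | ay] := leqP y a.
  by have /within[] : a <= y <= c by lia.
- by move=> y yS cy; have [_ _ /(_ (ltnW cy))[]] := link y yS.
- move=> y; rewrite inE => /orP[/eqP-> | yS ya]; first lia.
  by have [/(_ (ltnW ya))[]] := link y yS.
- move=> y; rewrite inE => /orP[/eqP-> // | yS ay].
  have [_ within above] := link y yS.
  have [yc | /ltnW/above[] //] := leqP y c.
  by have /within[] : a <= y <= c by lia.
Qed.

End Frontiers.

Theorem lemma9 (n : nat) (Ps : seq (seq int)) (a0 c0 : nat) (F : seq nat)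
    (a c : nat) :
  good_family n Ps ->
  conserved n Ps a0 c0 ->
  sorted ltn F ->
  (forall x, x \in F <-> in_maxF n Ps a0 c0 x) ->
  conserved n Ps a c ->
  a0 <= a -> c <= c0 ->
  ((exists l, l \in F /\ a <= l <= c) /\
     exists i j, [/\ i <= j, j < size F, a = nth 0 F i & c = nth 0 F j])
  \/
  ((forall l, l \in F -> ~~ (a <= l <= c)) /\
     exists i, i.+1 < size F /\ nth 0 F i < a /\ c < nth 0 F i.+1).
Proof.
move=> family I_conserved F_sorted F_maxF ac_conserved a0a cc0.
have ac := conserved_le ac_conserved.
have pairF x : x \in [:: a0; c0] -> x \in F.
  by move=> x_pair; apply/F_maxF; exists [:: a0; c0]; split=> //; apply: frontier_pair.
have [/hasP[l lF al_c] | /hasPn gap] := boolP (has (fun l => a <= l <= c) F).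
  left; split; first by exists l.
  have [S [FS lS]] := (F_maxF l).1 lF.
  have ends := frontier_ends family I_conserved FS lS ac_conserved.
  have [aF cF] : a \in F /\ c \in F.
    by split; apply/F_maxF; exists [:: a, c & S]; rewrite !inE eqxx ?orbT; split=> //;
      apply: ends; lia.
  exists (index a F), (index c F).
  by rewrite index_mem !nth_index // (sorted_index_leq F_sorted).
right; split=> //.
have a0F : a0 \in F by rewrite pairF ?mem_head.
have c0F : c0 \in F by rewrite pairF ?inE ?eqxx ?orbT.
apply: (sorted_gap F_sorted gap a0F _ c0F); last lia.
by have := gap a0 a0F; lia.
Qed.
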